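(* Let $X$ be a Hausdorff space and $\mathcal{H}$ a subspace with $\mathcal{F}_2(X)\subset\mathcal{H}\subset\mathcal{K}(X)$. Then $\mathcal{H}$ is extremally disconnected if and only if $X$ is discrete.
   Context: $\mathcal{K}(X)$ is the set of nonempty compact subsets of $X$ with the Vietoris topology (generated by $U^+=\{A: A\subset U\}$ and $U^-=\{A: A\cap U\neq\emptyset\}$ for $U$ open in $X$), and $\mathcal{F}_2(X)$ its subspace of nonempty subsets with at most $2$ points. A space is extremally disconnected if the closure of every open set is open. *)

From HB Require Import structures.
From mathcomp Require Import all_boot all_order.
From mathcomp Require Import all_classical all_reals all_analysis.
Set Implicit Arguments. Unset Strict Implicit. Unset Printing Implicit Defensive.
Local Open Scope classical_set_scope.

Section Vietoris.
Variable X : topologicalType.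

Definition Kspace : set (set X) := [set A | A !=set0 /\ compact A].

Definition F2space : set (set X) :=
  [set A | A !=set0 /\ exists x y : X, A `<=` [set x; y]].

Definition vplus (U : set X) : set (set X) := [set A | A `<=` U].
Definition vminus (U : set X) : set (set X) := [set A | A `&` U !=set0].

Definition vietoris_subbase (S : set (set X)) : Prop :=
  exists U : set X, open U /\ (S = vplus U \/ S = vminus U).

(** Open sets of the Vietoris topology on K(X): subsets of K(X) that are
    unions of (traces on K(X) of) finite intersections of subbasic sets. *)
Definition vietoris_open (W : set (set X)) : Prop :=
  W `<=` Kspace /\
  forall A, W A -> exists (n : nat) (S : nat -> set (set X)),
    (forall i, (i < n)%N -> vietoris_subbase (S i)) /\
    (forall i, (i < n)%N -> S i A) /\
    (forall B, Kspace B -> (forall i, (i < n)%N -> S i B) -> W B).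

Definition rel_open (H V : set (set X)) : Prop :=
  exists W, vietoris_open W /\ V = W `&` H.

Definition rel_closure (H V : set (set X)) : set (set X) :=
  [set A | H A /\ forall W, rel_open H W -> W A -> W `&` V !=set0].

Definition extremally_disconnected_sub (H : set (set X)) : Prop :=
  forall V, rel_open H V -> rel_open H (rel_closure H V).

Definition discrete_top : Prop := forall A : set X, open A.

End Vietoris.

Arguments Kspace X : clear implicits.
Arguments F2space X : clear implicits.
Arguments discrete_top X : clear implicits.

From HB Require Import structures.
From mathcomp Require Import all_boot all_order.
From mathcomp Require Import all_classical all_reals all_analysis.
Set Implicit Arguments. Unset Strict Implicit. Unset Printing Implicit Defensive.
Local Open Scope classical_set_scope.

(* If X is discrete, compact sets are finite, so every A in K(X) is isolated:
   {A} = A^+ ∩ ⋂_(a ∈ A) {a}^-; then every subset of H is clopen.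
   Conversely, let p be a non-isolated point.  By Zorn, take a maximal family F
   of pairwise disjoint open sets whose closures miss p; by maximality and the
   Hausdorff property every neighbourhood of p meets two distinct members of F.
   The set V of A ∈ H lying inside one member of F is open and {p} lies in its
   closure.  If this closure were open it would contain G^+ ∩ H for some open
   G ∋ p, hence a pair {x, y} with x, y in two distinct members of F; but such
   pairs form an open set disjoint from V. *)

Section IsolatedPoints.
Variable X : topologicalType.

Lemma not_discrete_nonisolated : ~ discrete_top X -> exists p : X, ~ open [set p].
Proof.
move=> ndisc; apply: contrapT => hne; apply: ndisc => A.
rewrite -(image_id A) -bigcup_imset1; apply: bigcup_open => x _.
by apply: contrapT => nx; apply: hne; exists x.
Qed.

Lemma nonisolated_open_meets (p : X) (W : set X) :
  ~ open [set p] -> open W -> W p -> exists2 x, W x & x <> p.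
Proof.
move=> np oW Wp; apply: contrapT => hne; apply: np.
suff <- : W = [set p] by [].
apply/seteqP; split => [x Wx|x ->] //.
by apply: contrapT => xp; apply: hne; exists x.
Qed.

Lemma discrete_compact_finite (A : set X) :
  discrete_top X -> compact A -> finite_set A.
Proof.
(* For infinite A, a cluster point x of the cofinite filter on A is adherent to
   A minus {x}, although {x} is open. *)
move=> disc cA; apply: contrapT => infA.
pose F := filter_from (@finite_set X) (fun S => A `\` S).
have FF : Filter F.
  apply: filter_from_filter; first by exists set0; exact: finite_set0.
  move=> S1 S2 f1 f2; exists (S1 `|` S2); first by rewrite finite_setU.
  by move=> x [Ax nS]; split; split => // h; apply: nS; [left|right].
have PF : ProperFilter F.
  apply: filter_from_proper => S fS; apply/set0P/negP => /eqP h.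
  apply: infA; apply: (sub_finite_set _ fS) => x Ax.
  by apply: contrapT => nSx; have : (A `\` S) x by []; rewrite h.
have FA : F A by exists set0; [exact: finite_set0 | move=> x []].
have [x [Ax clx]] := cA F PF FA.
have FAx : F (A `\` [set x]) by exists [set x]; [exact: finite_set1|].
have nx : nbhs x [set x] by apply: open_nbhs_nbhs; split; [exact: disc|].
by have [y [[_ nyx] yx]] := clx _ _ FAx nx; apply: nyx.
Qed.

End IsolatedPoints.

Section VietorisOpen.
Variable X : topologicalType.

Lemma vietoris_open_vplus (U : set X) :
  open U -> vietoris_open (Kspace X `&` vplus U).
Proof.
move=> oU; split=> [A []//|A [KA AU]].
exists 1%N, (fun=> vplus U); split; first by move=> i _; exists U; split; [|left].
by split=> // B KB /(_ 0%N isT).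
Qed.

Lemma vietoris_open_vminusI (U1 U2 : set X) : open U1 -> open U2 ->
  vietoris_open (Kspace X `&` (vminus U1 `&` vminus U2)).
Proof.
move=> oU1 oU2; split=> [A []//|A [KA [AU1 AU2]]].
exists 2%N, (fun i => if i == 0%N then vminus U1 else vminus U2); split.
  by move=> [|i] _; [exists U1|exists U2]; split=> //; right.
split; first by case=> [|[|]].
by move=> B KB SB; split=> //; split; [exact: (SB 0%N)|exact: (SB 1%N)].
Qed.

Lemma vietoris_open_bigcup (I : Type) (D : set I) (W : I -> set (set X)) :
  (forall i, D i -> vietoris_open (W i)) -> vietoris_open (\bigcup_(i in D) W i).
Proof.
move=> oW; split=> [A [i Di /(oW i Di).1]//|A [i Di WiA]].
have [n [S [Ssub [SA SB]]]] := (oW i Di).2 A WiA.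
by exists n, S; split=> //; split=> // B KB /(SB B KB) WiB; exists i.
Qed.

Lemma vietoris_open_set1 (A : set X) :
  discrete_top X -> Kspace X A -> vietoris_open [set A].
Proof.
move=> disc KA; have [[x0 _] cA] := KA; split=> [_ ->//|_ ->].
have /finite_seqP [s sE] := discrete_compact_finite disc cA.
exists (size s).+1.
exists (fun i => if i == 0%N then vplus A else vminus [set nth x0 s i.-1]).
split.
  move=> i _; exists (if i == 0%N then A else [set nth x0 s i.-1]).
  by split; [exact: disc | case: (i == 0%N); [left|right]].
split.
  case=> [_ /= //|i]; rewrite ltnS => lis; exists (nth x0 s i); split=> //.
  by rewrite sE /=; exact: mem_nth.
move=> B KB SB; apply/seteqP; split; first exact: (SB 0%N).
move=> a Aa; have aS : a \in s by move: Aa; rewrite sE.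
have [b [Bb /= ab]] : vminus [set a] B.
  by rewrite -(nth_index x0 aS); apply: (SB (index a s).+1); rewrite ltnS index_mem.
by rewrite -ab.
Qed.

Lemma vietoris_open_nbhs_set1 (W : set (set X)) (p : X) :
  vietoris_open W -> W [set p] ->
  exists2 G, open G /\ G p & forall B, Kspace X B -> B `<=` G -> W B.
Proof.
move=> [_ hW] /hW [n [S [Ssub [Sp SB]]]].
suff [G [oG Gp] HG] : exists2 G, open G /\ G p &
    forall B : set X, B !=set0 -> B `<=` G -> forall i, (i < n)%N -> S i B.
  by exists G => // B KB BG; apply: SB => //; apply: HG => //; case: KB.
elim: n Ssub Sp {SB} => [|m IH] Ssub Sp.
  by exists setT => //; split; [exact: openT|].
have [G [oG Gp] HG] := IH (fun i im => Ssub i (ltnW im)) (fun i im => Sp i (ltnW im)).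
have [U [oU SU]] := Ssub m (ltnSn m).
have Up : U p by have := Sp m (ltnSn m); case: SU => -> /=; [apply | case=> x [->]].
exists (G `&` U); first by split; [exact: openI|].
move=> B B0 BGU i; rewrite ltnS leq_eqVlt => /orP[/eqP ->|im].
  case: SU => -> /=; first by move=> x /BGU [].
  by case: B0 => x Bx; exists x; split=> //; exact: (BGU _ Bx).2.
by apply: HG => // x /BGU [].
Qed.

End VietorisOpen.

Section CellularFamily.
Variables (X : topologicalType) (p : X).

Definition cellular_away (F : set (set X)) : Prop :=
  (forall Q, F Q -> open Q /\ nbhs p (~` Q)) /\ trivIset F id.

Lemma cellular_away_maximal : exists F, cellular_away F /\
  forall F', F `<` F' -> ~ cellular_away F'.
Proof.
apply: Zorn_bigcup => C CP Ctot; split.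
  by move=> Q [F CF FQ]; exact: (CP _ CF).1 _ FQ.
move=> Q1 Q2 [F1 CF1 F1Q1] [F2 CF2 F2Q2].
have [F12|F21] := Ctot _ _ CF1 CF2.
  exact: (CP _ CF2).2 _ _ (F12 _ F1Q1) F2Q2.
exact: (CP _ CF1).2 _ _ F1Q1 (F21 _ F2Q2).
Qed.

Hypotheses (hX : hausdorff_space X) (np : ~ open [set p]).
Variable F : set (set X).
Hypotheses (cF : cellular_away F) (maxF : forall F', F `<` F' -> ~ cellular_away F').

(* Otherwise W ∩ Gx, with Gx a neighbourhood of some x ≠ p in W separated
   from p, could be added to F. *)
Lemma maximal_cellular_away_meets (W : set X) :
  open W -> W p -> exists2 Q, F Q & W `&` Q !=set0.
Proof.
move=> oW Wp; have [x Wx xp] := nonisolated_open_meets np oW Wp.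
have := hX; rewrite open_hausdorff => /(_ x p (introN eqP xp)).
move=> [[Gx Gp] /= [Gxx Gpp] [oGx oGp /eqP GxGp0]]; rewrite !in_setE in Gxx Gpp.
apply: contrapT => noQ.
have WGx_F Q : F Q -> (W `&` Gx) `&` Q = set0.
  move=> FQ; apply/seteqP; split=> // z [[Wz _] Qz].
  by apply: noQ; exists Q => //; exists z.
apply: (@maxF (F `|` [set W `&` Gx])); split.
- by move=> Q FQ; left.
- move=> /(_ (W `&` Gx) (or_intror erefl)) /WGx_F /seteqP[/(_ x) + _].
  by apply; split; [split|].
- move=> Q [FQ|->]; first exact: cF.1 Q FQ.
  split; first exact: openI.
  apply: filterS (open_nbhs_nbhs (conj oGp Gpp)) => z Gpz [_ Gxz].
  by have : (Gx `&` Gp) z by []; rewrite GxGp0.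
- move=> Q1 Q2 [FQ1|->] [FQ2|->] Q12 //; first exact: cF.2.
    by move: Q12; rewrite setIC WGx_F // => /set0P/eqP.
  by move: Q12; rewrite WGx_F // => /set0P/eqP.
Qed.

Lemma maximal_cellular_away_meets2 (W : set X) : open W -> W p ->
  exists Q1 Q2, [/\ F Q1, F Q2, Q1 <> Q2, W `&` Q1 !=set0 & W `&` Q2 !=set0].
Proof.
move=> oW Wp; have [Q1 FQ1 WQ1] := maximal_cellular_away_meets oW Wp.
have N1p : nbhs p (~` Q1)° by apply: nbhs_interior; exact: (cF.1 _ FQ1).2.
have [Q2 FQ2 [y [[Wy N1y] Q2y]]] :=
  maximal_cellular_away_meets (openI oW (@open_interior _ _)) (conj Wp (nbhs_singleton N1p)).
exists Q1, Q2; split=> //; last by exists y.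
by move=> Q12; apply: (interior_subset N1y); rewrite Q12.
Qed.

End CellularFamily.

Section Cells.
Variables (X : topologicalType) (F : set (set X)).

Definition inside_cell : set (set X) :=
  \bigcup_(Q in F) (Kspace X `&` vplus Q).

Definition across_cells : set (set X) :=
  \bigcup_(Q in F) \bigcup_(Q' in F `\ Q) (Kspace X `&` (vminus Q `&` vminus Q')).

Hypothesis openF : forall Q, F Q -> open Q.

Lemma vietoris_open_inside_cell : vietoris_open inside_cell.
Proof. by apply: vietoris_open_bigcup => Q FQ; exact/vietoris_open_vplus/openF. Qed.

Lemma vietoris_open_across_cells : vietoris_open across_cells.
Proof.
apply: vietoris_open_bigcup => Q FQ; apply: vietoris_open_bigcup => Q' [FQ' _].
exact: vietoris_open_vminusI (openF FQ) (openF FQ').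
Qed.

Lemma inside_across_cells_disjoint : trivIset F id ->
  inside_cell `&` across_cells = set0.
Proof.
move=> trivF; apply/seteqP; split=> // A [[Q0 FQ0 [_ AQ0]]].
move=> [Q FQ [Q' [FQ' Q'Q] [_ [[a [Aa Qa]] [a' [Aa' Q'a']]]]]].
have Q0Q : Q0 = Q by apply: trivF => //; exists a; split=> //; exact: AQ0.
have Q0Q' : Q0 = Q' by apply: trivF => //; exists a'; split=> //; exact: AQ0.
by apply: Q'Q; rewrite -Q0Q -Q0Q'.
Qed.

End Cells.

Section VietorisSubspace.
Variables (X : topologicalType) (H : set (set X)).
Hypotheses (F2H : F2space X `<=` H) (HK : H `<=` Kspace X).

Lemma F2space_set2 (x y : X) : H [set x; y].
Proof. by apply: F2H; split; [exists x; left|exists x, y]. Qed.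

Lemma F2space_set1 (x : X) : H [set x].
Proof. by rewrite -(setUid [set x]); exact: F2space_set2. Qed.

Lemma discrete_extremally_disconnected :
  discrete_top X -> extremally_disconnected_sub H.
Proof.
move=> disc V [W [oW ->]].
suff -> : rel_closure H (W `&` H) = W `&` H by exists W.
apply/seteqP; split=> [A [HA clA]|A [WA HA]].
  have oA : rel_open H ([set A] `&` H).
    by exists [set A]; split=> //; exact: vietoris_open_set1 (HK HA).
  by have [_ [[/= -> _] WHA]] := clA _ oA (conj erefl HA).
by split=> // W' _ W'A; exists A.
Qed.

Section NonDiscrete.
Hypothesis hX : hausdorff_space X.
Variables (p : X) (F : set (set X)).
Hypotheses (np : ~ open [set p]) (cF : cellular_away p F)
  (maxF : forall F', F `<` F' -> ~ cellular_away p F').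

Lemma rel_closure_inside_cell_set1 :
  rel_closure H (inside_cell F `&` H) [set p].
Proof.
split=> [|_ [W [oW ->]] [Wp _]]; first exact: F2space_set1.
have [G [oG Gp] GW] := vietoris_open_nbhs_set1 oW Wp.
have [Q FQ [x [Gx Qx]]] := maximal_cellular_away_meets hX np cF maxF oG Gp.
have Hx := F2space_set1 x.
exists [set x]; split; split=> //; last by exists Q => //; split; [exact: HK|move=> _ ->].
by apply: GW => [|_ ->]; [exact: HK|].
Qed.

End NonDiscrete.

Lemma extremally_disconnected_discrete : hausdorff_space X ->
  extremally_disconnected_sub H -> discrete_top X.
Proof.
move=> hX ED; apply: contrapT => /not_discrete_nonisolated [p np].
have [F [cF maxF]] := cellular_away_maximal p.
have openF Q : F Q -> open Q by move=> /cF.1 [].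
have [W [oW clVE]] := ED _ (ex_intro _ _ (conj (vietoris_open_inside_cell openF) erefl)).
have := rel_closure_inside_cell_set1 hX np cF maxF; rewrite clVE => -[Wp _].
have [G [oG Gp] GW] := vietoris_open_nbhs_set1 oW Wp.
have [Q1 [Q2 [FQ1 FQ2 Q12 [x [Gx Q1x]] [y [Gy Q2y]]]]] :=
  maximal_cellular_away_meets2 hX np cF maxF oG Gp.
have Hxy := F2space_set2 x y.
have clVxy : rel_closure H (inside_cell F `&` H) [set x; y].
  by rewrite clVE; split=> //; apply: GW => [|z [->|->]] //; exact: HK.
have oV' : rel_open H (across_cells F `&` H).
  by exists (across_cells F); split=> //; exact: vietoris_open_across_cells.
have V'xy : (across_cells F `&` H) [set x; y].
  split=> //; exists Q1 => //; exists Q2; first by split=> // /esym.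
  by split; [exact: HK|split; [exists x; split=> //; left|exists y; split=> //; right]].
have [A [[V'A _] [VA _]]] := clVxy.2 _ oV' V'xy.
have := inside_across_cells_disjoint cF.2.
by move=> /seteqP[/(_ A (conj VA V'A))].
Qed.

End VietorisSubspace.

Theorem proposition3p3 (X : topologicalType) (H : set (set X)) :
  hausdorff_space X ->
  F2space X `<=` H -> H `<=` Kspace X ->
  (extremally_disconnected_sub H <-> discrete_top X).
Proof.
move=> hX F2H HK; split.
- exact: extremally_disconnected_discrete.
- exact: discrete_extremally_disconnected.
Qed.
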